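(* Let $\mathcal G$ encode a fine mixed subdivision of $n\Delta^{d-1}$ with $n\ge2$, let $t$ be a lattice point of $(n-2)\Delta^{d-1}$, and suppose $\bar j_0,\bar j_1,\dots,\bar j_\ell$ ($\ell\ge1$) is a path in $\mathbb G(t)$ where, for $0\le k\le\ell-1$, the edge between $\bar j_k$ and $\bar j_{k+1}$ has near label $i_k$ at $\bar j_k$ and near label $i'_{k+1}$ at $\bar j_{k+1}$. Then: (a) for each $0\le k\le\ell-1$, in the graph $\mathbb T(t+e_{\bar j_k})\setminus(i_k,\bar j_k)$ the vertices $\bar j_0,\dots,\bar j_k$ lie in a different connected component from the vertices $\bar j_{k+1},\dots,\bar j_\ell$; (b) for all $1\le k\le k'\le\ell-1$, $i'_k\neq i_{k'}$; (c) if $(i,\bar j_k)\in T_t$ for some $0\le k\le\ell$, then $i_{k'}\neq i$ for all $k\le k'\le\ell-1$ and $i'_{k'}\neq i$ for all $1\le k'\le k$.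
   Context: Fix positive integers $n,d$; $K_{n,d}$ is the complete bipartite graph with left vertices $[n]$ and right vertices $[\bar d]=\{\bar1,\dots,\bar d\}$; graphs are identified with edge sets; $RD$ denotes the vector of right-vertex degrees, $\mathbf 1$ the all-ones vector in $\mathbb Z^{[\bar d]}$, $e_{\bar j}$ a unit vector; lattice points of $k\Delta^{d-1}$ are vectors in $\mathbb Z_{\ge0}^{[\bar d]}$ with sum $k$. Two acyclic subgraphs are compatible if whenever both contain a perfect matching between the same $I\subseteq[n]$, $\bar J\subseteq[\bar d]$, these matchings coincide. A collection $\mathcal G$ of subgraphs of $K_{n,d}$ encodes a fine mixed subdivision of $n\Delta^{d-1}$ if: every $G\in\mathcal G$ is a spanning tree of $K_{n,d}$; (tree linkage) for each $G\in\mathcal G$ and each edge $e\in G$ not incident to a leaf, there are $G'\in\mathcal G$, $G'\neq G$, and $e'\in G'$ with $G\setminus e=G'\setminus e'$; (compatibility) any two trees of $\mathcal G$ are compatible. It is known that then for each lattice point $u$ of $(n-1)\Delta^{d-1}$ there is exactly one tree $\mathbb T(u)\in\mathcal G$ with $RD(\mathbb T(u))=u+\mathbf 1$, and these are all the trees of $\mathcal G$. For a lattice point $t$ of $(n-2)\Delta^{d-1}$, the tree-linkage graph $\mathbb G(t)$ is the graph on vertex set $[\bar d]$ in which $\bar j\neq\bar j'$ are adjacent iff $\mathbb T(t+e_{\bar j})\setminus\mathbb T(t+e_{\bar j'})=\{(i,\bar j)\}$ and $\mathbb T(t+e_{\bar j'})\setminus\mathbb T(t+e_{\bar j})=\{(i',\bar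 j')\}$ for some $i,i'\in[n]$; this edge carries the near label $i$ at its endpoint $\bar j$ and the near label $i'$ at its endpoint $\bar j'$. Let $T_t=\bigcap_{\bar j\in[\bar d]}\mathbb T(t+e_{\bar j})$. *)

From mathcomp Require Import all_boot.
Set Implicit Arguments. Unset Strict Implicit. Unset Printing Implicit Defensive.

(* Edges of K_{n,d}: pairs (i, jbar) with i : 'I_n (left), jbar : 'I_d (right).
   A subgraph is identified with its edge set. *)
Definition edge (n d : nat) := ('I_n * 'I_d)%type.
Definition vtx (n d : nat) := ('I_n + 'I_d)%type.

Definition adj n d (G : {set edge n d}) : rel (vtx n d) :=
  fun u v => match u, v with
             | inl i, inr j => (i, j) \in G
             | inr j, inl i => (i, j) \in G
             | _, _ => false
             end.

Definition deg n d (G : {set edge n d}) (v : vtx n d) : nat :=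
  match v with
  | inl i => #|[set e in G | e.1 == i]|
  | inr j => #|[set e in G | e.2 == j]|
  end.

Definition connectedG n d (G : {set edge n d}) : Prop :=
  forall u v : vtx n d, connect (adj G) u v.

Definition acyclicG n d (G : {set edge n d}) : Prop :=
  forall c : seq (vtx n d), uniq c -> 2 < size c -> ~~ cycle (adj G) c.

Definition spanning_tree n d (G : {set edge n d}) : Prop :=
  connectedG G /\ acyclicG G.

Definition is_pm n d (M : {set edge n d}) (I : {set 'I_n}) (J : {set 'I_d}) : Prop :=
  (forall e, e \in M -> e.1 \in I /\ e.2 \in J) /\
  (forall i, i \in I -> #|[set e in M | e.1 == i]| = 1) /\
  (forall j, j \in J -> #|[set e in M | e.2 == j]| = 1).

Definition compatible n d (G1 G2 : {set edge n d}) : Prop :=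
  forall (I : {set 'I_n}) (J : {set 'I_d}) (M1 M2 : {set edge n d}),
    M1 \subset G1 -> M2 \subset G2 -> is_pm M1 I J -> is_pm M2 I J -> M1 = M2.

Definition incident_to_leaf n d (G : {set edge n d}) (e : edge n d) : Prop :=
  deg G (inl e.1) = 1 \/ deg G (inr e.2) = 1.

Definition encodes_fine_mixed_subdivision n d (GG : {set {set edge n d}}) : Prop :=
  (forall G, G \in GG -> spanning_tree G) /\
  (forall G e, G \in GG -> e \in G -> ~ incident_to_leaf G e ->
     exists G', exists e', [/\ G' \in GG, G' != G, e' \in G' & G :\ e = G' :\ e']) /\
  (forall G1 G2, G1 \in GG -> G2 \in GG -> compatible G1 G2).

Definition RD n d (G : {set edge n d}) : {ffun 'I_d -> nat} :=
  [ffun j => #|[set e in G | e.2 == j]|].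

(* lattice points of k Delta^{d-1} *)
Definition lattice_pt d (k : nat) (u : {ffun 'I_d -> nat}) : Prop :=
  \sum_(j : 'I_d) u j = k.

Definition all_ones d : {ffun 'I_d -> nat} := [ffun _ => 1].
Definition addv d (u v : {ffun 'I_d -> nat}) : {ffun 'I_d -> nat} := [ffun j => u j + v j].
Definition unitv d (j : 'I_d) : {ffun 'I_d -> nat} := [ffun k => (k == j : nat)].

(* tree-linkage edge of G(t) between jb and jb' with near label i at jb and i' at jb' *)
Definition linkage_edge n d (T : {ffun 'I_d -> nat} -> {set edge n d})
    (t : {ffun 'I_d -> nat}) (jb jb' : 'I_d) (i i' : 'I_n) : Prop :=
  [/\ jb != jb',
      T (addv t (unitv jb)) :\: T (addv t (unitv jb')) = [set (i, jb)] &
      T (addv t (unitv jb')) :\: T (addv t (unitv jb)) = [set (i', jb')]].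

Definition Tt n d (T : {ffun 'I_d -> nat} -> {set edge n d}) (t : {ffun 'I_d -> nat})
  : {set edge n d} := \bigcap_(j : 'I_d) T (addv t (unitv j)).

(* Write x_k = (i_k, j_k) and y_(k+1) = (i'_(k+1), j_(k+1)) for the edges in which
   consecutive trees T_k := T(t + e_(j_k)) and T_(k+1) differ, so that
   F_k := T_k - x_k = T_(k+1) - y_(k+1) is a forest with two components.  Compatibility of
   T_k and T_(k+1) puts j_k and j_(k+1) in different components of F_k: otherwise x_k,
   y_(k+1) and two paths of F_k close an even cycle whose two alternating perfect matchings
   lie in T_k and in T_(k+1) and differ.  So one component of F_k contains j_k and
   i'_(k+1), the other i_k and j_(k+1).  Moreover the j_k-component of F_k lies inside the
   j_(k+1)-component of F_(k+1), and the i_(k+1)-component of F_(k+1) inside the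
   i_k-component of F_k.  Parts (a)-(c) follow by locating j_a, i'_k and the endpoints of
   the edges of T_t in these nested components. *)

From mathcomp Require Import all_boot zify.
Set Implicit Arguments. Unset Strict Implicit. Unset Printing Implicit Defensive.

Lemma connect_uniq_path (T : finType) (e : rel T) x y : connect e x y ->
  exists p, [/\ path e x p, uniq (x :: p) & last x p = y].
Proof.
by case/connectP=> p0 /shortenP + ->; case=> p pth uniq_p _; exists p.
Qed.

Lemma card_setU_filter (T : finType) (A B : {set T}) (P : pred T) :
  {in B, forall x, ~~ P x} -> #|[set x in A :|: B | P x]| = #|[set x in A | P x]|.
Proof.
move=> notPB; apply: eq_card => x; rewrite !inE.
by case: (boolP (x \in B)) => [/notPB/negbTE ->|_]; rewrite ?andbF ?orbF.
Qed.

Lemma setU1D1 (T : finType) (x y : T) (A : {set T}) :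
  x != y -> (x |: A) :\ y = x |: A :\ y.
Proof. by move=> xy; apply/setP => z; rewrite !inE; case: (z =P x) => // ->; rewrite xy. Qed.

Section Graphs.
Variables n d : nat.
Implicit Types (G H : {set edge n d}) (u v w : vtx n d).

Lemma adj_sym G : symmetric (adj G).
Proof. by move=> [a|a] [b|b]. Qed.

Lemma connect_adjC G u v : connect (adj G) u v = connect (adj G) v u.
Proof. exact: (sym_connect_sym (adj_sym G)). Qed.

Lemma connect_adj_sub G H u v :
  G \subset H -> connect (adj G) u v -> connect (adj H) u v.
Proof.
move=> sGH; apply: connect_sub => {}u {}v Guv; apply: connect1.
by case: u v Guv => [a|b] [a'|b'] //= /(subsetP sGH).
Qed.

Lemma connect_adj_edge G (a : 'I_n) (b : 'I_d) :
  (a, b) \in G -> connect (adj G) (inl a) (inr b).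
Proof. exact: connect1. Qed.

Lemma connect_setU1_away H (g : edge n d) u v :
  ~~ connect (adj H) u (inl g.1) -> ~~ connect (adj H) u (inr g.2) ->
  connect (adj (g |: H)) u v -> connect (adj H) u v.
Proof.
move=> u_g1 u_g2 /connectP [p + ->] {v}.
move: (connect0 (adj H) u); elim: p {2 3 5}u => [|z p IHp] c //= Huc /andP [gcz].
apply: IHp; suff Hcz : adj H c z by exact: connect_trans Huc (connect1 Hcz).
case: c z Huc gcz => [a|b] [a'|b'] //= Huc; rewrite !inE => /orP [/eqP g_eq|] //;
  by rewrite -g_eq Huc in u_g1 u_g2.
Qed.

Lemma connect_setD1 G (g : edge n d) u v : g \in G ->
  ~~ connect (adj G) u (inr g.2) ->
  connect (adj G) u v -> connect (adj (G :\ g)) u v.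
Proof.
move=> gG u_g2 Guv; have sub := connect_adj_sub (subD1set G g).
apply: (connect_setU1_away (g := g)); last by rewrite setD1K.
- apply: contra u_g2 => /sub Gu1; apply: connect_trans Gu1 _.
  by case: g gG {sub} => a b; apply: connect_adj_edge.
- by apply: contra u_g2 => /sub.
Qed.

Lemma tree_setD1_sides G (g : edge n d) w : connectedG G -> g \in G ->
  connect (adj (G :\ g)) w (inl g.1) \/ connect (adj (G :\ g)) w (inr g.2).
Proof.
move=> conG gG; case: (boolP (connect _ w (inl g.1))) => [|w_g1]; [by left | right].
apply/negPn/negP => w_g2; case/negP: (w_g1).
by apply: connect_setU1_away w_g1 w_g2 _; rewrite setD1K.
Qed.

Lemma acyclic_setD1_sep G (a : 'I_n) (b : 'I_d) : acyclicG G -> (a, b) \in G ->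
  ~~ connect (adj (G :\ (a, b))) (inl a) (inr b).
Proof.
move=> acG abG; apply/negP => /connect_uniq_path [p [pth uniq_p b_last]].
have sub : subrel (adj (G :\ (a, b))) (adj G).
  by move=> [x|x] [y|y] //=; rewrite inE => /andP [].
have size_p : 2 < size (inl a :: p).
  case: p pth {uniq_p} b_last => [|z [|z' p]] //= /andP [+ _] z_b.
  by rewrite z_b /= !inE eqxx.
have /negP := acG _ uniq_p size_p; apply.
by rewrite /= rcons_path (sub_path sub pth) b_last.
Qed.

End Graphs.

Section Matchings.
Variables n d : nat.
Implicit Types (M : {set edge n d}) (I : {set 'I_n}) (J : {set 'I_d}).

Lemma is_pm_setU M1 M2 I1 I2 J1 J2 : [disjoint I1 & I2] -> [disjoint J1 & J2] ->
  is_pm M1 I1 J1 -> is_pm M2 I2 J2 -> is_pm (M1 :|: M2) (I1 :|: I2) (J1 :|: J2).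
Proof.
move=> dI dJ [sub1 [degI1 degJ1]] [sub2 [degI2 degJ2]]; split; [|split].
- by move=> e; rewrite inE => /orP [/sub1|/sub2] [eI eJ]; rewrite !inE eI eJ ?orbT.
- move=> a; rewrite inE => /orP [aI|aI].
  + rewrite card_setU_filter ?degI1 // => e /sub2 [eI _].
    by apply: contraTneq eI => ->; rewrite (disjointFr dI aI).
  + rewrite setUC card_setU_filter ?degI2 // => e /sub1 [eI _].
    by apply: contraTneq eI => ->; rewrite (disjointFl dI aI).
- move=> b; rewrite inE => /orP [bJ|bJ].
  + rewrite card_setU_filter ?degJ1 // => e /sub2 [_ eJ].
    by apply: contraTneq eJ => ->; rewrite (disjointFr dJ bJ).
  + rewrite setUC card_setU_filter ?degJ2 // => e /sub1 [_ eJ].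
    by apply: contraTneq eJ => ->; rewrite (disjointFl dJ bJ).
Qed.

Lemma is_pm_set0 : is_pm (set0 : {set edge n d}) set0 set0.
Proof. by split; [|split] => ?; rewrite inE. Qed.

Lemma is_pm_set1 (a : 'I_n) (b : 'I_d) : is_pm [set (a, b)] [set a] [set b].
Proof.
split; [|split].
- by move=> e /set1P ->; rewrite !inE.
- move=> a' /set1P ->; rewrite -[RHS](cards1 (a, b)); apply: eq_card => e.
  by rewrite !inE andb_idr // => /eqP ->.
- move=> b' /set1P ->; rewrite -[RHS](cards1 (a, b)); apply: eq_card => e.
  by rewrite !inE andb_idr // => /eqP ->.
Qed.

Lemma is_pm_setU1 M I J (a : 'I_n) (b : 'I_d) : a \notin I -> b \notin J ->
  is_pm M I J -> is_pm ((a, b) |: M) (a |: I) (b |: J).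
Proof. by move=> aI bJ; apply: is_pm_setU (is_pm_set1 a b); rewrite disjoints1. Qed.

Lemma is_pm_glue M1 M2 I1 I2 J1 J2 (a : 'I_n) (b : 'I_d) :
  [disjoint I1 & I2] -> [disjoint J1 & J2] -> a \in I2 -> b \in J1 ->
  is_pm M1 I1 (J1 :\ b) -> is_pm M2 (I2 :\ a) J2 ->
  is_pm ((a, b) |: (M1 :|: M2)) (I1 :|: I2) (J1 :|: J2).
Proof.
move=> dI dJ aI2 bJ1 pm1 pm2.
have -> : I1 :|: I2 = a |: (I1 :|: I2 :\ a).
  by rewrite setUCA setD1K // setUA setUid.
have -> : J1 :|: J2 = b |: (J1 :\ b :|: J2).
  by rewrite setUA setD1K.
apply: is_pm_setU1; last apply: is_pm_setU pm1 pm2.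
- by rewrite !inE eqxx (disjointFl dI aI2).
- by rewrite !inE eqxx (disjointFr dJ bJ1).
- exact: disjointWr (subD1set _ _) dI.
- exact: disjointWl (subD1set _ _) dJ.
Qed.

End Matchings.

Section PathMatchings.
Variables n d : nat.
Implicit Types (F : {set edge n d}) (s : seq (vtx n d)).

Definition left_vtx s : {set 'I_n} := [set a | inl a \in s].
Definition right_vtx s : {set 'I_d} := [set b | inr b \in s].

Lemma left_vtx_inl a s : left_vtx (inl a :: s) = a |: left_vtx s.
Proof. by apply/setP => c; rewrite !inE. Qed.
Lemma left_vtx_inr b s : left_vtx (inr b :: s) = left_vtx s.
Proof. by apply/setP => c; rewrite !inE. Qed.
Lemma right_vtx_inl a s : right_vtx (inl a :: s) = right_vtx s.
Proof. by apply/setP => c; rewrite !inE. Qed.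
Lemma right_vtx_inr b s : right_vtx (inr b :: s) = b |: right_vtx s.
Proof. by apply/setP => c; rewrite !inE. Qed.

(* [M1] and [M2] are the two sets of alternate edges of the path. *)
Lemma path_pm_inr F (u w : 'I_d) p :
  path (adj F) (inr u) p -> uniq (inr u :: p) -> last (inr u) p = inr w ->
  exists M1 M2 : {set edge n d}, [/\ M1 \subset F, M2 \subset F,
    is_pm M1 (left_vtx (inr u :: p)) (right_vtx (inr u :: p) :\ u) &
    is_pm M2 (left_vtx (inr u :: p)) (right_vtx (inr u :: p) :\ w)].
Proof.
have [m] := ubnP (size p); elim: m u p => // m IHm u [|[a|//] [|[a'|b] q]] //= size_p.
- move=> _ _ [<-]; exists set0, set0; rewrite !sub0set.
  have -> : left_vtx [:: inr u] = set0 by apply/setP => c; rewrite !inE.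
  by rewrite right_vtx_inr setU1K ?inE //; split=> //; apply: is_pm_set0.
- by rewrite andbF.
move=> /and3P [ua ab pth] /andP [u_notin /andP [a_notin uniq_q]] q_last.
have [M1 [M2 [M1F M2F pm1 pm2]]] := IHm b q (ltnSE (ltnW size_p)) pth uniq_q q_last.
rewrite left_vtx_inr left_vtx_inl right_vtx_inr right_vtx_inl.
set L := left_vtx _ in pm1 pm2 *; set R := right_vtx _ in pm1 pm2 *.
have aL : a \notin L by rewrite inE.
have uR : u \notin R by move: u_notin; rewrite !inE => /norP [_].
have bR : b \in R by rewrite inE mem_head.
have wR : w \in R by rewrite inE -q_last mem_last.
exists ((a, b) |: M1), ((a, u) |: M2); split.
- by rewrite subUset sub1set ab M1F.
- by rewrite subUset sub1set ua M2F.
- by rewrite (setU1K uR) -(setD1K bR); apply: is_pm_setU1; rewrite ?inE ?eqxx.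
- rewrite setU1D1; last by apply: contraNneq uR => ->.
  by apply: is_pm_setU1; rewrite // inE negb_and uR orbT.
Qed.

Lemma path_pm_inl F (u w : 'I_n) p :
  path (adj F) (inl u) p -> uniq (inl u :: p) -> last (inl u) p = inl w ->
  exists M1 M2 : {set edge n d}, [/\ M1 \subset F, M2 \subset F,
    is_pm M1 (left_vtx (inl u :: p) :\ u) (right_vtx (inl u :: p)) &
    is_pm M2 (left_vtx (inl u :: p) :\ w) (right_vtx (inl u :: p))].
Proof.
have [m] := ubnP (size p); elim: m u p => // m IHm u [|[//|b] [|[a|b'] q]] //= size_p;
  last by rewrite andbF.
- move=> _ _ [<-]; exists set0, set0; rewrite !sub0set.
  have -> : right_vtx [:: inl u] = set0 by apply/setP => c; rewrite !inE.
  by rewrite left_vtx_inl setU1K ?inE //; split=> //; apply: is_pm_set0.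
move=> /and3P [ub ab pth] /andP [u_notin /andP [b_notin uniq_q]] q_last.
have [M1 [M2 [M1F M2F pm1 pm2]]] := IHm a q (ltnSE (ltnW size_p)) pth uniq_q q_last.
rewrite left_vtx_inl left_vtx_inr right_vtx_inl right_vtx_inr.
set L := left_vtx _ in pm1 pm2 *; set R := right_vtx _ in pm1 pm2 *.
have bR : b \notin R by rewrite inE.
have uL : u \notin L by move: u_notin; rewrite !inE => /norP [_].
have aL : a \in L by rewrite inE mem_head.
have wL : w \in L by rewrite inE -q_last mem_last.
exists ((a, b) |: M1), ((u, b) |: M2); split.
- by rewrite subUset sub1set ab M1F.
- by rewrite subUset sub1set ub M2F.
- by rewrite (setU1K uL) -(setD1K aL); apply: is_pm_setU1; rewrite ?inE ?eqxx.
- rewrite setU1D1; last by apply: contraNneq uL => ->.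
  by apply: is_pm_setU1; rewrite // inE negb_and uL orbT.
Qed.

End PathMatchings.

Section Compatibility.
Variables n d : nat.
Implicit Types (A B : {set edge n d}).

Lemma compatible_tree_sep A B (x y : edge n d) :
  spanning_tree A -> compatible A B -> x \in A -> x \notin B -> y \in B ->
  A :\ x \subset B -> ~~ connect (adj (A :\ x)) (inl y.1) (inr y.2) ->
  ~~ connect (adj (A :\ x)) (inr x.2) (inr y.2).
Proof.
case: x y => xa xb [ya yb] /= [conA acA] cAB xA xB yB sFB y_sep.
set F := A :\ (xa, xb); have x_sep := acyclic_setD1_sep acA xA.
apply/negP => xb_yb.
have xa_ya : connect (adj F) (inl xa) (inl ya).
  case: (tree_setD1_sides (inl ya) conA xA) => /= [|ya_xb]; first by rewrite connect_adjC.
  by case/negP: y_sep; apply: connect_trans ya_xb xb_yb.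
have [p [pth uniq_p p_last]] := connect_uniq_path xb_yb.
have [q [qth uniq_q q_last]] := connect_uniq_path xa_ya.
have [M1 [M2 [M1F M2F pmM1 pmM2]]] := path_pm_inr pth uniq_p p_last.
have [N1 [N2 [N1F N2F pmN1 pmN2]]] := path_pm_inl qth uniq_q q_last.
have sep v : v \in inr xb :: p -> v \in inl xa :: q -> False.
  move=> /(path_connect pth) xb_v /(path_connect qth) xa_v.
  by case/negP: x_sep; apply: connect_trans xa_v _; rewrite connect_adjC.
have dL : [disjoint left_vtx (inr xb :: p) & left_vtx (inl xa :: q)].
  by apply/pred0P => c /=; apply/negP => /andP []; rewrite !inE; apply: sep.
have dR : [disjoint right_vtx (inr xb :: p) & right_vtx (inl xa :: q)].
  by apply/pred0P => c /=; apply/negP => /andP []; rewrite !inE; apply: sep.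
have xa_q : xa \in left_vtx (inl xa :: q) by rewrite inE mem_head.
have ya_q : ya \in left_vtx (inl xa :: q) by rewrite inE -q_last mem_last.
have xb_p : xb \in right_vtx (inr xb :: p) by rewrite inE mem_head.
have yb_p : yb \in right_vtx (inr xb :: p) by rewrite inE -p_last mem_last.
have subA : (xa, xb) |: (M1 :|: N1) \subset A.
  by rewrite subUset sub1set xA !subUset !(subset_trans _ (subD1set A (xa, xb))).
have subB : (ya, yb) |: (M2 :|: N2) \subset B.
  by rewrite subUset sub1set yB !subUset !(subset_trans _ sFB).
have eqM := cAB _ _ _ _ subA subB (is_pm_glue dL dR xa_q xb_p pmM1 pmN1)
  (is_pm_glue dL dR ya_q yb_p pmM2 pmN2).
by case/negP: xB; apply: (subsetP subB); rewrite -eqM setU11.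
Qed.

End Compatibility.

Section LinkagePath.
Variables (n d l : nat) (T : nat -> {set edge n d}) (j : nat -> 'I_d) (i i' : nat -> 'I_n).
Hypothesis T_tree : forall k, k <= l -> spanning_tree (T k).
Hypothesis T_compatible : forall k k', k <= l -> k' <= l -> compatible (T k) (T k').
Hypothesis T_setD_succ : forall k, k < l -> T k :\: T k.+1 = [set (i k, j k)].
Hypothesis T_succ_setD : forall k, k < l -> T k.+1 :\: T k = [set (i' k.+1, j k.+1)].
Hypothesis j_inj : forall k k', k <= l -> k' <= l -> j k = j k' -> k = k'.

Local Notation F k := (T k :\ (i k, j k)).
Local Notation linked k u v := (connect (adj (F k)) u v).

Lemma removed_in k : k < l -> (i k, j k) \in T k.
Proof. by move=> kl; have := set11 (i k, j k); rewrite -T_setD_succ // inE => /andP []. Qed.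

Lemma removed_notin k : k < l -> (i k, j k) \notin T k.+1.
Proof. by move=> kl; have := set11 (i k, j k); rewrite -T_setD_succ // inE => /andP []. Qed.

Lemma added_in k : k < l -> (i' k.+1, j k.+1) \in T k.+1.
Proof. by move=> kl; have := set11 (i' k.+1, j k.+1); rewrite -T_succ_setD // inE => /andP []. Qed.

Lemma added_notin k : k < l -> (i' k.+1, j k.+1) \notin T k.
Proof. by move=> kl; have := set11 (i' k.+1, j k.+1); rewrite -T_succ_setD // inE => /andP []. Qed.

Lemma F_succ k : k < l -> F k = T k.+1 :\ (i' k.+1, j k.+1).
Proof.
move=> kl; apply/setP => e; rewrite !inE.
have /setP/(_ e) := T_setD_succ kl; have /setP/(_ e) := T_succ_setD kl; rewrite !inE.
by case: (e \in T k); case: (e \in T k.+1) => /= <- <-.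
Qed.

Lemma removed_sep k : k < l -> ~~ linked k (inl (i k)) (inr (j k)).
Proof. by move=> kl; apply: acyclic_setD1_sep (T_tree (ltnW kl)).2 (removed_in kl). Qed.

Lemma added_sep k : k < l -> ~~ linked k (inl (i' k.+1)) (inr (j k.+1)).
Proof. by move=> kl; rewrite F_succ //; apply: acyclic_setD1_sep (T_tree kl).2 (added_in kl). Qed.

Lemma j_succ_sep k : k < l -> ~~ linked k (inr (j k)) (inr (j k.+1)).
Proof.
move=> kl; apply: (compatible_tree_sep (y := (i' k.+1, j k.+1))).
- exact: T_tree (ltnW kl).
- exact: T_compatible (ltnW kl) kl.
- exact: removed_in.
- exact: removed_notin.
- exact: added_in.
- by rewrite F_succ // subD1set.
- exact: added_sep.
Qed.

Lemma linked_j_succ k : k < l -> linked k (inr (j k.+1)) (inl (i k)).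
Proof.
move=> kl; case: (tree_setD1_sides (inr (j k.+1)) (T_tree (ltnW kl)).1 (removed_in kl)) => //.
by move=> h; case/negP: (j_succ_sep kl); rewrite connect_adjC.
Qed.

Lemma linked_i'_succ k : k < l -> linked k (inl (i' k.+1)) (inr (j k)).
Proof.
move=> kl; rewrite connect_adjC.
have := tree_setD1_sides (inr (j k)) (T_tree kl).1 (added_in kl); rewrite -F_succ //.
by case=> // h; case/negP: (j_succ_sep kl).
Qed.

(* If i'_(k+1) = i_(k+1) then F_k = F_(k+1), and [compatible_tree_sep] for T_k and T_(k+2)
   separates j_k from j_(k+2) in F_k, although both are joined to i_(k+1) there. *)
Lemma i'_neq_i k : k.+1 < l -> i' k.+1 != i k.+1.
Proof.
move=> kl; have kl' := ltnW kl; apply/eqP => i'_eq.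
have F_eq : F k = F k.+1 by rewrite F_succ // i'_eq.
have x_notin : (i k, j k) \notin T k.+2.
  apply: contraFN (_ : (i k, j k) \in F k = false); last by rewrite !inE eqxx.
  rewrite F_eq F_succ // !inE => ->; rewrite andbT; apply/negP => /eqP [_ /j_inj].
  by move/(_ (ltnW kl') kl); lia.
have := compatible_tree_sep (T_tree (ltnW kl')) (T_compatible (ltnW kl') kl)
  (removed_in kl') x_notin (added_in kl); rewrite /= F_eq.
case/(_ _ (added_sep kl))/negP; first by rewrite F_succ // subD1set.
have := linked_i'_succ kl'; rewrite F_eq i'_eq connect_adjC => /connect_trans; apply.
by rewrite connect_adjC linked_j_succ.
Qed.

Lemma removed_succ_in_F k : k.+1 < l -> (i k.+1, j k.+1) \in F k.
Proof.
move=> kl; rewrite F_succ ?(ltnW kl) // !inE xpair_eqE eqxx andbT eq_sym.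
by rewrite i'_neq_i // removed_in.
Qed.

Lemma added_in_F k : k.+1 < l -> (i' k.+1, j k.+1) \in F k.+1.
Proof. by move=> kl; rewrite !inE xpair_eqE eqxx andbT i'_neq_i // added_in ?(ltnW kl). Qed.

Lemma F_setD1 k : k.+1 < l -> F k :\ (i k.+1, j k.+1) = F k.+1 :\ (i' k.+1, j k.+1).
Proof. by move=> kl; rewrite F_succ ?(ltnW kl) // !setDDl setUC. Qed.

Lemma linked_j_step k v : k.+1 < l ->
  linked k v (inr (j k)) -> linked k.+1 v (inr (j k.+1)).
Proof.
move=> kl v_j; have kl' := ltnW kl.
have i'_v : linked k (inl (i' k.+1)) v.
  by apply: connect_trans (linked_i'_succ kl') _; rewrite connect_adjC.
have := connect_setD1 (removed_succ_in_F kl) (added_sep kl') i'_v.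
rewrite F_setD1 // => /(connect_adj_sub (subD1set _ _)); rewrite connect_adjC.
by move/connect_trans; apply; apply: connect1; apply: added_in_F.
Qed.

Lemma linked_i_step k v : k.+1 < l ->
  linked k.+1 v (inl (i k.+1)) -> linked k v (inl (i k)).
Proof.
move=> kl v_i; have kl' := ltnW kl; rewrite connect_adjC in v_i.
have := connect_setD1 (added_in_F kl) (removed_sep kl) v_i.
rewrite -F_setD1 // => /(connect_adj_sub (subD1set _ _)); rewrite connect_adjC.
move/connect_trans; apply; apply: connect_trans (linked_j_succ kl').
by apply: connect1; apply: removed_succ_in_F.
Qed.

Lemma linked_j_le k k' v : k <= k' -> k' < l ->
  linked k v (inr (j k)) -> linked k' v (inr (j k')).
Proof.
elim: k' => [|k' IHk]; first by rewrite leqn0 => /eqP ->.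
rewrite leq_eqVlt ltnS => /orP [/eqP <- //|kk'] kl v_j.
by apply: linked_j_step => //; apply: IHk => //; apply: ltnW.
Qed.

Lemma linked_i_le k k' v : k <= k' -> k' < l ->
  linked k' v (inl (i k')) -> linked k v (inl (i k)).
Proof.
elim: k' => [|k' IHk]; first by rewrite leqn0 => /eqP ->.
rewrite leq_eqVlt ltnS => /orP [/eqP <- //|kk'] kl v_i.
by apply: IHk => //; [apply: ltnW | apply: linked_i_step].
Qed.

Lemma linked_j_separated k a b : k < l -> a <= k -> k < b -> b <= l ->
  ~~ linked k (inr (j a)) (inr (j b)).
Proof.
move=> kl ak; case: b => // b kb bl; apply/negP => ja_jb.
have ja_jk := linked_j_le ak kl (connect0 _ (inr (j a))).
have jb_ik := linked_i_le (kb : k <= b) bl (linked_j_succ bl).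
case/negP: (removed_sep kl); rewrite connect_adjC.
by apply: connect_trans (connect_trans _ ja_jb) jb_ik; rewrite connect_adjC.
Qed.

Lemma near_labels_neq k k' : 0 < k -> k <= k' -> k' < l -> i' k != i k'.
Proof.
case: k => // k _ kk' k'l; apply/eqP => i'_eq.
have := linked_j_le (ltnW kk') k'l (linked_i'_succ (ltn_trans kk' k'l)).
by rewrite i'_eq; apply/negP; apply: removed_sep.
Qed.

Lemma common_edge_labels (i0 : 'I_n) k : k <= l ->
  (forall m, m <= l -> (i0, j k) \in T m) ->
  (forall k', k <= k' -> k' < l -> i k' != i0) /\
  (forall k', 0 < k' -> k' <= k -> i' k' != i0).
Proof.
move=> kl i0_T; split=> [k' kk' k'l | [//|c] _ ck]; apply/eqP => i_eq.
- have i0_F : (i0, j k) \in F k'.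
    rewrite !inE i0_T ?(ltnW k'l) // andbT; apply: contraNneq (removed_notin k'l).
    by move=> <-; apply: i0_T.
  have := linked_j_le kk' k'l (connect0 _ (inr (j k))).
  move/(connect_trans (connect_adj_edge i0_F)).
  by rewrite -i_eq; apply/negP; apply: removed_sep.
- have cl : c < l by apply: leq_trans ck kl.
  have i0_F : (i0, j k) \in F c.
    rewrite F_succ // !inE i0_T // andbT; apply: contraNneq (added_notin cl).
    by move=> <-; apply: i0_T (ltnW _).
  case: k kl ck i0_T i0_F => // k kl ck i0_T i0_F.
  have jk_ic := linked_i_le (ck : c <= k) kl (linked_j_succ kl).
  have := linked_i'_succ cl; rewrite i_eq connect_adjC => /connect_trans jc_i0.
  case/negP: (removed_sep cl); rewrite connect_adjC; apply: jc_i0.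
  exact: connect_trans (connect_adj_edge i0_F) jk_ic.
Qed.

End LinkagePath.

Lemma lattice_pt_addv_unitv d k (t : {ffun 'I_d -> nat}) (j : 'I_d) :
  lattice_pt k t -> lattice_pt k.+1 (addv t (unitv j)).
Proof.
rewrite /lattice_pt => t_sum; under eq_bigr do rewrite !ffunE.
rewrite big_split /= t_sum (bigD1 j) //= eqxx big1 ?addn0 ?addn1 // => j' /negbTE -> //.
Qed.

Theorem mainTheorem15 (n d : nat) (GG : {set {set edge n d}})
  (T : {ffun 'I_d -> nat} -> {set edge n d})
  (t : {ffun 'I_d -> nat}) (l : nat)
  (j : nat -> 'I_d) (i i' : nat -> 'I_n) :
  0 < d -> 2 <= n ->
  encodes_fine_mixed_subdivision GG ->
  (* T u is the tree of GG with right degree vector u + 1 *)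
  (forall u, lattice_pt (n - 1) u -> T u \in GG /\ RD (T u) = addv u (all_ones d)) ->
  lattice_pt (n - 2) t ->
  1 <= l ->
  (* j_0, ..., j_l is a path (distinct vertices) in G(t) with near labels *)
  (forall k k', k <= l -> k' <= l -> j k = j k' -> k = k') ->
  (forall k, k < l -> linkage_edge T t (j k) (j k.+1) (i k) (i' k.+1)) ->
  (* (a) *)
  (forall k, k < l -> forall a b, a <= k -> k < b -> b <= l ->
     ~~ connect (adj (T (addv t (unitv (j k))) :\ (i k, j k))) (inr (j a)) (inr (j b))) /\
  (* (b) *)
  (forall k k', 1 <= k -> k <= k' -> k' < l -> i' k != i k') /\
  (* (c) *)
  (forall (i0 : 'I_n) k, k <= l -> (i0, j k) \in Tt T t ->
     (forall k', k <= k' -> k' < l -> i k' != i0) /\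
     (forall k', 1 <= k' -> k' <= k -> i' k' != i0)).
Proof.
move=> _ n2 [GG_tree [_ GG_compatible]] T_GG t_pt _ j_inj link.
pose Tr k := T (addv t (unitv (j k))).
have Tr_GG k : Tr k \in GG.
  apply: (T_GG _ _).1; rewrite (_ : n - 1 = (n - 2).+1); last by lia.
  exact: lattice_pt_addv_unitv.
have Tr_tree k : k <= l -> spanning_tree (Tr k) by move=> _; apply: GG_tree.
have Tr_compatible k k' : k <= l -> k' <= l -> compatible (Tr k) (Tr k').
  by move=> _ _; apply: GG_compatible.
have Tr_setD_succ k : k < l -> Tr k :\: Tr k.+1 = [set (i k, j k)].
  by case/link.
have Tr_succ_setD k : k < l -> Tr k.+1 :\: Tr k = [set (i' k.+1, j k.+1)].
  by case/link.
split; [|split].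
- move=> k kl a b.
  exact: (linked_j_separated Tr_tree Tr_compatible Tr_setD_succ Tr_succ_setD j_inj).
- move=> k k'.
  exact: (near_labels_neq Tr_tree Tr_compatible Tr_setD_succ Tr_succ_setD j_inj).
- move=> i0 k kl /bigcapP i0_Tt.
  apply: (common_edge_labels Tr_tree Tr_compatible Tr_setD_succ Tr_succ_setD j_inj kl).
  by move=> m _; apply: i0_Tt.
Qed.
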